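(* In the Heisenberg–Weyl algebra $\mathcal A$, for all integers $0\le k\le n$ one has $q^{k}p^{n}q^{n-k} = p^{n-k}q^{n}p^{k}$.
   Context: $\mathcal{A}$ denotes the quotient of the free associative $\mathbb{C}$-algebra on two noncommuting generators $p,q$ by the two-sided ideal generated by $qp-pq-\imath$, where $\imath=\sqrt{-1}$. *)

From HB Require Import structures.
From mathcomp Require Import all_boot all_order all_algebra all_field.
Set Implicit Arguments. Unset Strict Implicit. Unset Printing Implicit Defensive.
Import Order.TTheory GRing.Theory Num.Theory.
Local Open Scope ring_scope.

Definition weyl_relation (A : algType algC) (p q : A) : Prop :=
  q * p - p * q = 'i%:A.

(* Write c = 'i%:A, which is central, and N = p * q, so the
   Weyl relation reads q * p = N + c.  Conjugating N by p or q shifts it by c: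
   p * N = (N - c) * p  and  q * N = (N + c) * q,  hence by induction
   p ^+ k * N = (N - c *+ k) * p ^+ k  and  q ^+ k * N = (N + c *+ k) * q ^+ k.
   Two consequences follow:
   - q ^+ k * p ^+ k commutes with N (the two shifts cancel);
   - p ^+ m.+1 * q ^+ m.+1 = (N - c *+ m) * (p ^+ m * q ^+ m), so
     p ^+ m * q ^+ m is a polynomial in N and commutes with everything that
     commutes with N.
   Therefore q ^+ k * p ^+ k and p ^+ m * q ^+ m commute.  Writing n = k + m,
   both sides of the theorem are products of these two words in the two
   possible orders, which proves it. *)
From HB Require Import structures.
From mathcomp Require Import all_boot all_order all_algebra all_field.
Import Order.TTheory GRing.Theory Num.Theory.
Local Open Scope ring_scope.

Section ShiftPowers.
Context {A : pzRingType} {a N d : A}.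
Hypothesis d_central : forall y, d * y = y * d.

Lemma shift_pow (k : nat) :
  a * N = (N + d) * a -> a ^+ k * N = (N + d *+ k) * a ^+ k.
Proof.
move=> shift_a; elim: k => [|k IH]; first by rewrite expr0 mul1r mulr1 addr0.
rewrite exprS -mulrA IH mulrA mulrDr shift_a mulrnAr -d_central -mulrnAl.
by rewrite -mulrDl -addrA -mulrS mulrA.
Qed.

End ShiftPowers.

Section WeylWords.
Context {A : pzRingType} {p q c : A}.
Hypothesis c_central : forall y, c * y = y * c.
Hypothesis qp_rel : q * p = p * q + c.

Lemma p_shift : p * (p * q) = (p * q - c) * p.
Proof. by rewrite mulrBl c_central -mulrA qp_rel mulrDr addrK mulrA. Qed.

Lemma q_shift : q * (p * q) = (p * q + c) * q.
Proof. by rewrite mulrA qp_rel. Qed.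

Lemma p_pow_shift (k : nat) : p ^+ k * (p * q) = (p * q - c *+ k) * p ^+ k.
Proof.
rewrite -mulNrn; apply: shift_pow; last exact: p_shift.
by move=> y; rewrite mulNr mulrN c_central.
Qed.

Lemma q_pow_shift (k : nat) : q ^+ k * (p * q) = (p * q + c *+ k) * q ^+ k.
Proof. exact: shift_pow c_central _ q_shift. Qed.

(* q ^+ k * p ^+ k commutes with N: the two shifts cancel. *)
Lemma qp_word_commN (k : nat) :
  q ^+ k * p ^+ k * (p * q) = p * q * (q ^+ k * p ^+ k).
Proof.
rewrite -mulrA p_pow_shift mulrA mulrBr mulrBl q_pow_shift mulrnAr.
by rewrite -c_central -mulrnAl -!mulrA -mulrBl addrK !mulrA.
Qed.

(* The words p ^+ m * q ^+ m satisfy a recursion making them polynomials in N. *)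
Lemma pq_word_succ (m : nat) :
  p ^+ m.+1 * q ^+ m.+1 = (p * q - c *+ m) * (p ^+ m * q ^+ m).
Proof.
rewrite exprSr exprS -mulrA (mulrA p) (mulrA _ (p * q)).
by rewrite p_pow_shift -mulrA.
Qed.

Lemma pq_word_comm (x : A) (m : nat) :
  x * (p * q) = p * q * x -> x * (p ^+ m * q ^+ m) = p ^+ m * q ^+ m * x.
Proof.
move=> commN; elim: m => [|m IH]; first by rewrite !expr0 !mulr1 mul1r.
have comm_shift : x * (p * q - c *+ m) = (p * q - c *+ m) * x.
  by rewrite mulrBr mulrBl commN mulrnAr mulrnAl c_central.
by rewrite pq_word_succ mulrA comm_shift -mulrA IH mulrA.
Qed.

End WeylWords.

Theorem corollary2p6 (A : algType algC) (p q : A) (hpq : weyl_relation p q)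
  (k n : nat) (hkn : (k <= n)%N) :
  q ^+ k * p ^+ n * q ^+ (n - k) = p ^+ (n - k) * q ^+ n * p ^+ k.
Proof.
have i_central (y : A) : 'i%:A * y = y * 'i%:A by rewrite mulr_algl mulr_algr.
have qp_rel : q * p = p * q + 'i%:A by rewrite -hpq addrC subrK.
have [m ->] : exists m, n = (k + m)%N by exists (n - k)%N; rewrite subnKC.
rewrite addKn exprD [(k + m)%N]addnC exprD.
have -> : q ^+ k * (p ^+ k * p ^+ m) * q ^+ m
        = (q ^+ k * p ^+ k) * (p ^+ m * q ^+ m) by rewrite !mulrA.
have -> : p ^+ m * (q ^+ m * q ^+ k) * p ^+ k
        = (p ^+ m * q ^+ m) * (q ^+ k * p ^+ k) by rewrite !mulrA.
exact/(pq_word_comm i_central qp_rel)/(qp_word_commN i_central qp_rel).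
Qed.
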